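(* Let $X$ be a real Hilbert space, let $\alpha\in\mathbb{R}\setminus\{0\}$ and $\beta>0$, equip $X\times X\times\mathbb{R}$ with the norm $\|(u,v,\gamma)\|=\sqrt{\|u\|^2+\|v\|^2+\beta^2|\gamma|^2}$, and let $$\widetilde{C}_\alpha=\{(u,v,\gamma)\in X\times X\times\mathbb{R} : \|u\|^2-\|v\|^2=2\alpha\gamma\}.$$ Let $(u_0,v_0,\gamma_0)\in X\times X\times\mathbb{R}$. Then the following hold. (i) If $u_0\neq 0$ and $v_0\neq 0$, then $$P_{\widetilde{C}_\alpha}(u_0,v_0,\gamma_0)=\Big\{\Big(\frac{u_0}{1+\lambda},\frac{v_0}{1-\lambda},\gamma_0+\frac{\lambda\alpha}{\beta^2}\Big)\Big\},$$ where $\lambda$ is the unique solution in $]-1,1[$ of $$g(\lambda):=\frac{(\lambda^2+1)p-2\lambda q}{(1-\lambda^2)^2}-\frac{2\lambda\alpha^2}{\beta^2}-2\alpha\gamma_0=0,$$ with $p:=\|u_0\|^2-\|v_0\|^2$ and $q:=\|u_0\|^2+\|v_0\|^2$. (ii) If $u_0=0$ and $v_0\neq 0$: (a) if $\alpha(\gamma_0-\frac{\alpha}{\beta^2})<-\frac{\|v_0\|^2}{8}$, then $P_{\widetilde{C}_\alpha}(0,v_0,\gamma_0)=\{(0,\frac{v_0}{1-\lambda},\gamma_0+\frac{\lambda\alpha}{\beta^2})\}$ for the unique $\lambda\in]-1,1[$ solving $g_1(\lambda):=\frac{\|v_0\|^2}{(1-\lambda)^2}+\frac{2\lambda\alpha^2}{\beta^2}+2\alpha\gamma_0=0$;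 (b) if $\alpha(\gamma_0-\frac{\alpha}{\beta^2})\geq-\frac{\|v_0\|^2}{8}$, then $$P_{\widetilde{C}_\alpha}(0,v_0,\gamma_0)=\Big\{\Big(u,\frac{v_0}{2},\gamma_0-\frac{\alpha}{\beta^2}\Big): u\in X,\ \|u\|=\sqrt{2\alpha\big(\gamma_0-\tfrac{\alpha}{\beta^2}\big)+\tfrac{\|v_0\|^2}{4}}\Big\},$$ which is a singleton if and only if $\alpha(\gamma_0-\frac{\alpha}{\beta^2})=-\frac{\|v_0\|^2}{8}$. (iii) If $u_0\neq 0$ and $v_0=0$: (a) if $\alpha(\gamma_0+\frac{\alpha}{\beta^2})>\frac{\|u_0\|^2}{8}$, then $P_{\widetilde{C}_\alpha}(u_0,0,\gamma_0)=\{(\frac{u_0}{1+\lambda},0,\gamma_0+\frac{\lambda\alpha}{\beta^2})\}$ for the unique $\lambda\in]-1,1[$ solving $g_2(\lambda):=\frac{\|u_0\|^2}{(1+\lambda)^2}-\frac{2\lambda\alpha^2}{\beta^2}-2\alpha\gamma_0=0$; (b) if $\alpha(\gamma_0+\frac{\alpha}{\beta^2})\leq\frac{\|u_0\|^2}{8}$, then $$P_{\widetilde{C}_\alpha}(u_0,0,\gamma_0)=\Big\{\Big(\frac{u_0}{2},v,\gamma_0+\frac{\alpha}{\beta^2}\Big): v\in X,\ \|v\|=\sqrt{-2\alpha\big(\gamma_0+\tfrac{\alpha}{\beta^2}\big)+\tfrac{\|u_0\|^2}{4}}\Big\},$$ which is a singleton if and only if $\alpha(\gamma_0+\frac{\alpha}{\beta^2})=\frac{\|u_0\|^2}{8}$.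 (iv) If $u_0=0$ and $v_0=0$: (a) if $\alpha\gamma_0>\frac{\alpha^2}{\beta^2}$, then $P_{\widetilde{C}_\alpha}(0,0,\gamma_0)$ is the non-singleton set $\{(u,0,\gamma_0-\frac{\alpha}{\beta^2}): u\in X,\ \|u\|=\sqrt{2\alpha(\gamma_0-\frac{\alpha}{\beta^2})}\}$; (b) if $|\alpha\gamma_0|\leq\frac{\alpha^2}{\beta^2}$, then $P_{\widetilde{C}_\alpha}(0,0,\gamma_0)=\{(0,0,0)\}$; (c) if $\alpha\gamma_0<-\frac{\alpha^2}{\beta^2}$, then $P_{\widetilde{C}_\alpha}(0,0,\gamma_0)$ is the non-singleton set $\{(0,v,\gamma_0+\frac{\alpha}{\beta^2}): v\in X,\ \|v\|=\sqrt{-2\alpha(\gamma_0+\frac{\alpha}{\beta^2})}\}$.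
   Context: For a nonempty set $S\subseteq X\times X\times\mathbb{R}$, the projection $P_S(z)$ is the (possibly empty or multi-valued) set $\operatorname{argmin}_{w\in S}\|w-z\|$, where the norm is the $\beta$-weighted norm $\|(u,v,\gamma)\|=\sqrt{\|u\|^2+\|v\|^2+\beta^2|\gamma|^2}$. *)

From HB Require Import structures.
From mathcomp Require Import all_boot all_order all_algebra.
From mathcomp Require Import all_classical all_reals all_analysis.
Set Implicit Arguments. Unset Strict Implicit. Unset Printing Implicit Defensive.
Import Order.TTheory GRing.Theory Num.Theory.
Import numFieldNormedType.Exports.
Local Open Scope classical_set_scope.
Local Open Scope ring_scope.

(* A real Hilbert space is modelled as a complete normed module X over a
   realType R together with an inner product ip inducing the norm. *)
Definition is_inner_product (R : realType) (X : normedModType R)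
  (ip : X -> X -> R) : Prop :=
  [/\ (forall x y, ip x y = ip y x),
      (forall (a : R) (x y z : X), ip (a *: x + y) z = a * ip x z + ip y z) &
      (forall x, ip x x = `|x| ^+ 2)].

Definition wnorm (R : realType) (X : normedModType R) (beta : R)
  (w : X * X * R) : R :=
  Num.sqrt (`|w.1.1| ^+ 2 + `|w.1.2| ^+ 2 + beta ^+ 2 * `|w.2| ^+ 2).

Definition wdist (R : realType) (X : normedModType R) (beta : R)
  (w z : X * X * R) : R :=
  wnorm beta (w.1.1 - z.1.1, w.1.2 - z.1.2, w.2 - z.2).

Definition Ctilde (R : realType) (X : normedModType R) (alpha : R)
  : set (X * X * R) :=
  [set w | `|w.1.1| ^+ 2 - `|w.1.2| ^+ 2 = 2 * alpha * w.2].

Definition wproj (R : realType) (X : normedModType R) (beta : R)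
  (S : set (X * X * R)) (z : X * X * R) : set (X * X * R) :=
  [set w | S w /\ forall w', S w' -> wdist beta w z <= wdist beta w' z].

Definition is_singleton (T : Type) (A : set T) : Prop := exists a, A = [set a].

Definition gfun (R : realType) (alpha beta gamma0 p q : R) (l : R) : R :=
  ((l ^+ 2 + 1) * p - 2 * l * q) / (1 - l ^+ 2) ^+ 2
  - 2 * l * alpha ^+ 2 / beta ^+ 2 - 2 * alpha * gamma0.

Definition g1fun (R : realType) (alpha beta gamma0 nv2 : R) (l : R) : R :=
  nv2 / (1 - l) ^+ 2 + 2 * l * alpha ^+ 2 / beta ^+ 2 + 2 * alpha * gamma0.

Definition g2fun (R : realType) (alpha beta gamma0 nu2 : R) (l : R) : R :=
  nu2 / (1 + l) ^+ 2 - 2 * l * alpha ^+ 2 / beta ^+ 2 - 2 * alpha * gamma0.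

From HB Require Import structures.
From mathcomp Require Import all_boot all_order all_algebra.
From mathcomp Require Import all_classical all_reals all_analysis.
From mathcomp Require Import polyrcf ring lra.
Import Order.TTheory GRing.Theory Num.Theory.
Import numFieldNormedType.Exports.

(* Call l a Lagrange multiplier at a point ws = (us, vs, gs) of C~_alpha for
   z0 = (u0, v0, gamma0) when u0 = (1 + l) us, v0 = (1 - l) vs and
   beta^2 (gs - gamma0) = l alpha.  Adding l (|u|^2 - |v|^2 - 2 alpha gamma) = 0
   to the squared distance and completing squares shows that every w in C~_alpha
   satisfies
     ||w - z0||^2 = ||ws - z0||^2 + (1 + l)|u - us|^2 + (1 - l)|v - vs|^2
                    + beta^2 |gamma - gs|^2,
   so for |l| <= 1 the point ws is a nearest point, and the nearest points are
   the w in C~_alpha annihilating this nonnegative excess.  For |l| < 1 this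
   leaves ws alone; ws lies in C~_alpha exactly when g(l) = 0, a root of g exists
   by the intermediate value theorem applied to its numerator, and it is unique
   because the projection is.  For l = -1 (resp. l = 1) the u- (resp. v-)
   coordinate is free on a sphere fixed by the constraint; the case v0 = 0 is the
   mirror image of u0 = 0 under the isometry (u, v, gamma) |-> (v, u, -gamma) of
   C~_alpha.  When u0 = v0 = 0 and |alpha gamma0| <= alpha^2 / beta^2, the
   multiplier of the origin is l = -beta^2 gamma0 / alpha. *)

Set Implicit Arguments.
Unset Strict Implicit.
Unset Printing Implicit Defensive.
Local Open Scope classical_set_scope.
Local Open Scope ring_scope.

Section InnerProduct.
Variables (R : realType) (X : normedModType R) (ip : X -> X -> R).
Hypothesis hip : is_inner_product ip.

Lemma ip_linear a x y z : ip (a *: x + y) z = a * ip x z + ip y z.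
Proof. by case: hip. Qed.

Lemma ip0 z : ip 0 z = 0.
Proof. by have := ip_linear 1 0 0 z; rewrite scaler0 addr0 mul1r; lra. Qed.

Lemma ipZ a x z : ip (a *: x) z = a * ip x z.
Proof. by rewrite -[a *: x]addr0 ip_linear ip0 addr0. Qed.

Lemma ipB x y z : ip (x - y) z = ip x z - ip y z.
Proof. by rewrite addrC -scaleN1r ip_linear mulN1r addrC. Qed.

Lemma normB_sqr x y : `|x - y| ^+ 2 = `|x| ^+ 2 - 2 * ip x y + `|y| ^+ 2.
Proof.
case: hip => ipC _ ipxx.
by rewrite -!ipxx ipB ![ip _ (x - y)]ipC !ipB (ipC y x); ring.
Qed.

Lemma normZ_sqr (a : R) (x : X) : `|a *: x| ^+ 2 = a ^+ 2 * `|x| ^+ 2.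
Proof. by rewrite normrZ exprMn real_normK // num_real. Qed.

Lemma normB_scale_sqr (l : R) (u us : X) :
  `|u - (1 + l) *: us| ^+ 2 + l * `|u| ^+ 2 =
  (1 + l) * `|u - us| ^+ 2 + `|us - (1 + l) *: us| ^+ 2 + l * `|us| ^+ 2.
Proof.
case: hip => ipC _ ipxx.
by rewrite !normB_sqr !normZ_sqr ![ip _ ((1 + l) *: _)]ipC !ipZ ipxx (ipC us u); ring.
Qed.

End InnerProduct.

Section Sphere.
Variables (R : realType) (X : normedModType R).
Hypothesis X_nontrivial : exists x : X, x != 0.

Lemma exists_normr_eq r : 0 <= r -> exists u : X, `|u| = r.
Proof.
case: X_nontrivial => x x0 r0; exists ((r / `|x|) *: x).
by rewrite normrZ ger0_norm ?divr_ge0 // divfK // normr_eq0.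
Qed.

Lemma is_singleton_sphere_image (T : Type) (f : X -> T) (r : R) :
  injective f -> 0 <= r ->
  is_singleton [set w | exists u, `|u| = Num.sqrt r /\ w = f u] <-> r = 0.
Proof.
move=> f_inj r0; split=> [[a Sa]|->].
- have [u ur] := exists_normr_eq (sqrtr_ge0 r).
  have inS y : `|y| = Num.sqrt r -> f y = a.
    by move=> yr; have : [set a] (f y) by rewrite -Sa; exists y.
  have /f_inj/eqP : f u = f (- u) by rewrite !inS ?normrN.
  rewrite -subr_eq0 opprK -mulr2n -scaler_nat scaler_eq0 pnatr_eq0 /= => /eqP u0.
  by apply/eqP; rewrite eq_le r0 andbT -sqrtr_eq0 -ur u0 normr0.
- exists (f 0); apply/seteqP; split=> [w [u [/eqP]]|w ->].
  + by rewrite sqrtr0 normr_eq0 => /eqP -> ->.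
  + by exists 0; rewrite normr0 sqrtr0.
Qed.

End Sphere.

Section Projection.
Variables (R : realType) (X : normedModType R) (ip : X -> X -> R).
Hypothesis hip : is_inner_product ip.
Variables (alpha beta : R).
Hypothesis beta_gt0 : 0 < beta.

Local Notation C := (Ctilde (X:=X) alpha).
Local Notation P := (wproj beta C).

Definition sqdist (w z : X * X * R) : R :=
  `|w.1.1 - z.1.1| ^+ 2 + `|w.1.2 - z.1.2| ^+ 2 + beta ^+ 2 * (w.2 - z.2) ^+ 2.

Lemma sqdist_ge0 w z : 0 <= sqdist w z.
Proof. by rewrite /sqdist !addr_ge0 // mulr_ge0 // sqr_ge0. Qed.

Lemma wdist_le_sqdist w w' z :
  (wdist beta w z <= wdist beta w' z) = (sqdist w z <= sqdist w' z).
Proof.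
by rewrite /wdist /wnorm /= !real_normK ?num_real // ler_sqrt // sqdist_ge0.
Qed.

Definition lagrange_multiplier (l : R) (z ws : X * X * R) : Prop :=
  [/\ z.1.1 = (1 + l) *: ws.1.1, z.1.2 = (1 - l) *: ws.1.2
    & beta ^+ 2 * (ws.2 - z.2) = l * alpha].

Definition excess (l : R) (ws w : X * X * R) : R :=
  (1 + l) * `|w.1.1 - ws.1.1| ^+ 2 + (1 - l) * `|w.1.2 - ws.1.2| ^+ 2
  + beta ^+ 2 * (w.2 - ws.2) ^+ 2.

Lemma excess_ge0 l ws w : -1 <= l <= 1 -> 0 <= excess l ws w.
Proof.
by case/andP=> l1 l2; rewrite /excess !addr_ge0 // mulr_ge0 ?sqr_ge0 //; lra.
Qed.

Lemma excess_eq0 l ws w : -1 <= l <= 1 ->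
  (excess l ws w == 0) =
  [&& (1 + l == 0) || (w.1.1 == ws.1.1), (1 - l == 0) || (w.1.2 == ws.1.2)
    & w.2 == ws.2].
Proof.
case/andP=> l1 l2.
have p1 : 0 <= (1 + l) * `|w.1.1 - ws.1.1| ^+ 2 by rewrite mulr_ge0 ?sqr_ge0 //; lra.
have p2 : 0 <= (1 - l) * `|w.1.2 - ws.1.2| ^+ 2 by rewrite mulr_ge0 ?sqr_ge0 //; lra.
have p3 : 0 <= beta ^+ 2 * (w.2 - ws.2) ^+ 2 by rewrite mulr_ge0 ?sqr_ge0.
rewrite /excess (paddr_eq0 (addr_ge0 p1 p2) p3) (paddr_eq0 p1 p2).
by rewrite !mulf_eq0 !orbb !normr_eq0 !subr_eq0 (gt_eqF beta_gt0) andbA.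
Qed.

Lemma sqdist_decomp l z ws w : lagrange_multiplier l z ws -> C ws -> C w ->
  sqdist w z = sqdist ws z + excess l ws w.
Proof.
case: z ws w => [[u0 v0] g0] [[us vs] gs] [[u v] g] [/= hu hv hg].
rewrite /Ctilde /sqdist /excess /= => Cs Cw.
have ku := normB_scale_sqr hip l u us.
have kv := normB_scale_sqr hip (- l) v vs.
rewrite -hu in ku; rewrite -hv in kv.
have kg : beta ^+ 2 * (g - g0) ^+ 2 - 2 * (l * alpha) * g =
  beta ^+ 2 * (g - gs) ^+ 2 + beta ^+ 2 * (gs - g0) ^+ 2 - 2 * (l * alpha) * gs.
  by rewrite -hg; ring.
have cw : l * `|u| ^+ 2 - l * `|v| ^+ 2 = 2 * (l * alpha) * g.
  by rewrite -mulrBr Cw; ring.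
have cs : l * `|us| ^+ 2 - l * `|vs| ^+ 2 = 2 * (l * alpha) * gs.
  by rewrite -mulrBr Cs; ring.
lra.
Qed.

Lemma wproj_excess l z ws : -1 <= l <= 1 -> lagrange_multiplier l z ws -> C ws ->
  forall w, P z w <-> C w /\ excess l ws w = 0.
Proof.
move=> hl hz Cs w; have := excess_ge0 ws w hl.
split=> [[Cw wmin]|[Cw ex0]].
- have := wmin _ Cs; rewrite wdist_le_sqdist (sqdist_decomp hz Cs Cw).
  by split=> //; lra.
- split=> // w' Cw'; have := excess_ge0 ws w' hl.
  rewrite wdist_le_sqdist (sqdist_decomp hz Cs Cw) (sqdist_decomp hz Cs Cw') ex0.
  lra.
Qed.

Lemma wproj_interior l z ws : -1 < l < 1 -> lagrange_multiplier l z ws -> C ws ->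
  P z = [set ws].
Proof.
move=> /andP[l1 l2] hz Cs; have hl : -1 <= l <= 1 by rewrite !ltW.
have [n1 n2] : 1 + l != 0 /\ 1 - l != 0 by split; apply/eqP; lra.
apply/seteqP; split=> [w|w ->]; rewrite (wproj_excess hl hz Cs).
- case=> _ /eqP; rewrite excess_eq0 // (negbTE n1) (negbTE n2) /=.
  case/and3P=> /eqP e1 /eqP e2 /eqP e3.
  by case: w e1 e2 e3 => [[? ?] ?]; case: ws {hz Cs} => [[? ?] ?] /= -> -> ->.
- by split=> //; apply/eqP; rewrite excess_eq0 // !eqxx !orbT.
Qed.

Definition lagrange_point (u0 v0 : X) (g0 l : R) : X * X * R :=
  ((1 + l)^-1 *: u0, (1 - l)^-1 *: v0, g0 + l * alpha / beta ^+ 2).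

Lemma lagrange_point_multiplier u0 v0 g0 l : -1 < l < 1 ->
  lagrange_multiplier l (u0, v0, g0) (lagrange_point u0 v0 g0 l).
Proof.
case/andP=> l1 l2; have [n1 n2] : 1 + l != 0 /\ 1 - l != 0 by split; apply/eqP; lra.
split=> /=; rewrite ?scalerA ?mulfV ?scale1r //.
by field; rewrite gt_eqF.
Qed.

Lemma lagrange_point_Ctilde u0 v0 g0 l : -1 < l < 1 ->
  gfun alpha beta g0 (`|u0| ^+ 2 - `|v0| ^+ 2) (`|u0| ^+ 2 + `|v0| ^+ 2) l = 0 ->
  C (lagrange_point u0 v0 g0 l).
Proof.
case/andP=> l1 l2; have [n1 n2] : 1 + l != 0 /\ 1 - l != 0 by split; apply/eqP; lra.
have n3 : 1 - l ^+ 2 != 0 by apply/eqP; nra.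
rewrite /gfun /Ctilde /= !normZ_sqr => g0_root.
rewrite -[LHS]subr0 -g0_root; field.
by rewrite gt_eqF // n1 n2 n3.
Qed.

Lemma wproj_lagrange_point (u0 v0 : X) g0 (G : R -> R) : alpha != 0 ->
  (exists l, -1 < l < 1 /\ G l = 0) ->
  (forall l, -1 < l < 1 -> G l = 0 -> C (lagrange_point u0 v0 g0 l)) ->
  (exists! l, -1 < l < 1 /\ G l = 0) /\
  (forall l, -1 < l < 1 -> G l = 0 ->
     P (u0, v0, g0) = [set lagrange_point u0 v0 g0 l]).
Proof.
move=> alpha0 [l0 [hl0 Gl0]] hC.
have PE l : -1 < l < 1 -> G l = 0 -> P (u0, v0, g0) = [set lagrange_point u0 v0 g0 l].
  by move=> hl Gl; exact: (wproj_interior hl (lagrange_point_multiplier _ _ _ hl) (hC _ hl Gl)).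
split=> //; exists l0; split=> // l [hl Gl].
(* [l] is read off the last coordinate of the unique nearest point. *)
have : [set lagrange_point u0 v0 g0 l0] (lagrange_point u0 v0 g0 l).
  by rewrite -PE // (PE l).
have b2 : (beta ^+ 2)^-1 != 0 by rewrite invr_eq0 expf_neq0 ?gt_eqF.
by case=> _ _ /addrI/(mulIf b2)/(mulIf alpha0).
Qed.

Lemma wproj_origin g0 : alpha != 0 -> `|alpha * g0| <= alpha ^+ 2 / beta ^+ 2 ->
  P (0, 0, g0) = [set (0, 0, 0)].
Proof.
move=> alpha0; rewrite ler_norml => /andP[ag1 ag2].
have c0 : 0 < beta ^+ 2 / alpha ^+ 2.
  by rewrite divr_gt0 ?exprn_even_gt0 ?alpha0 ?gt_eqF.
have c1 : beta ^+ 2 / alpha ^+ 2 * (alpha ^+ 2 / beta ^+ 2) = 1.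
  by field; rewrite alpha0 gt_eqF.
set l := - (beta ^+ 2 * g0 / alpha).
have el : l = - (beta ^+ 2 / alpha ^+ 2 * (alpha * g0)) by rewrite /l; field.
have hl : -1 <= l <= 1 by rewrite el; nra.
have hz : lagrange_multiplier l (0, 0, g0) (0, 0, 0).
  by split; rewrite /= ?scaler0 // /l; field.
have C0 : C (0, 0, 0) by rewrite /Ctilde /= normr0 expr0n /= mulr0 subrr.
apply/seteqP; split=> [[[u v] g]|w ->]; rewrite (wproj_excess hl hz C0).
- case=> Cw ex0; move/eqP: (ex0); rewrite excess_eq0 // => /and3P[_ _ /eqP /= g_eq0].
  move: Cw ex0; rewrite /Ctilde /excess /= g_eq0 !subr0 expr0n /= !mulr0 addr0.
  move=> Cw ex0; have uv : `|v| ^+ 2 = `|u| ^+ 2 by lra.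
  rewrite uv in ex0; have u_eq0 : `|u| ^+ 2 = 0 by lra.
  have v_eq0 : `|v| ^+ 2 = 0 by lra.
  by move/eqP: v_eq0; move/eqP: u_eq0; rewrite !sqrf_eq0 !normr_eq0 => /eqP-> /eqP->.
- by split=> //; apply/eqP; rewrite excess_eq0 // !eqxx !orbT.
Qed.

Lemma wproj_sphere_u (v0 : X) g0 : (exists x : X, x != 0) ->
  0 <= 2 * alpha * (g0 - alpha / beta ^+ 2) + `|v0| ^+ 2 / 4 ->
  P (0, v0, g0) =
    [set w | exists u : X,
       `|u| = Num.sqrt (2 * alpha * (g0 - alpha / beta ^+ 2) + `|v0| ^+ 2 / 4)
       /\ w = (u, 2^-1 *: v0, g0 - alpha / beta ^+ 2)].
Proof.
set r := _ + _ => X_nontrivial r0; set gs := g0 - _.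
have half_v0 : `|2^-1 *: v0| ^+ 2 = `|v0| ^+ 2 / 4.
  by rewrite normZ_sqr; field.
have Cr u : `|u| = Num.sqrt r -> C (u, 2^-1 *: v0, gs).
  by move=> ur; rewrite /Ctilde /= ur sqr_sqrtr // half_v0 /r /gs; lra.
have [u1 u1r] := exists_normr_eq X_nontrivial (sqrtr_ge0 r).
have hl : -1 <= (-1 : R) <= 1 by apply/andP; split; lra.
have hz : lagrange_multiplier (-1) (0, v0, g0) (u1, 2^-1 *: v0, gs).
  split=> /=; first by rewrite addrN scale0r.
    by rewrite opprK scalerA -[1 + 1]/2 divff ?scale1r // pnatr_eq0.
  by rewrite /gs; field; rewrite gt_eqF.
have n2 : (1 - -1 : R) != 0 by rewrite opprK -[1 + 1]/2 pnatr_eq0.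
apply/seteqP; split=> [[[u v] g]|w [u [ur ->]]]; rewrite (wproj_excess hl hz (Cr _ u1r)).
- case=> Cw /eqP; rewrite excess_eq0 // addrN eqxx (negbTE n2) /=.
  case/andP=> /eqP vE /eqP gE; exists u; split; last by rewrite vE gE.
  move: Cw; rewrite /Ctilde /= vE gE half_v0 => Cw.
  by rewrite -[LHS]normr_id -sqrtr_sqr /r -/gs; congr Num.sqrt; lra.
- by split; [exact: Cr | apply/eqP; rewrite excess_eq0 // addrN !eqxx orbT].
Qed.

Definition wswap (w : X * X * R) : X * X * R := (w.1.2, w.1.1, - w.2).

Lemma wswapK : involutive wswap.
Proof. by case=> [[u v] g]; rewrite /wswap /= opprK. Qed.

Lemma Ctilde_wswap w : C (wswap w) <-> C w.
Proof. by rewrite /Ctilde /=; split=> Cw; lra. Qed.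

Lemma wdist_wswap w z : wdist beta (wswap w) (wswap z) = wdist beta w z.
Proof. by rewrite /wdist /wnorm /= -opprD normrN (addrC (`|w.1.2 - _| ^+ 2)). Qed.

Lemma wproj_wswap z w : P z w -> P (wswap z) (wswap w).
Proof.
case=> Cw wmin; split=> [|w' Cw']; first exact/Ctilde_wswap.
by rewrite -[w']wswapK !wdist_wswap; apply: wmin; apply/Ctilde_wswap.
Qed.

Lemma wproj_sphere_v (u0 : X) g0 : (exists x : X, x != 0) ->
  0 <= - (2 * alpha * (g0 + alpha / beta ^+ 2)) + `|u0| ^+ 2 / 4 ->
  P (u0, 0, g0) =
    [set w | exists v : X,
       `|v| = Num.sqrt (- (2 * alpha * (g0 + alpha / beta ^+ 2)) + `|u0| ^+ 2 / 4)
       /\ w = (2^-1 *: u0, v, g0 + alpha / beta ^+ 2)].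
Proof.
move=> X_nontrivial r0.
have er : 2 * alpha * (- g0 - alpha / beta ^+ 2) + `|u0| ^+ 2 / 4 =
          - (2 * alpha * (g0 + alpha / beta ^+ 2)) + `|u0| ^+ 2 / 4 by ring.
have := @wproj_sphere_u u0 (- g0) X_nontrivial; rewrite er => /(_ r0) E.
have eg : - (- g0 - alpha / beta ^+ 2) = g0 + alpha / beta ^+ 2 by rewrite opprD !opprK.
apply/seteqP; split=> [w /wproj_wswap|w [v [vr ->]]].
- rewrite E => -[v [vr wE]]; exists v; split=> //.
  by rewrite -[w]wswapK wE /wswap /= eg.
- have : P (0, u0, - g0) (v, 2^-1 *: u0, - g0 - alpha / beta ^+ 2) by rewrite E; exists v.
  by move/wproj_wswap; rewrite /wswap /= opprK eg.
Qed.

End Projection.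

Lemma poly_root_N11 (R : realType) (p : {poly R}) :
  p.[-1] * p.[1] < 0 -> exists2 l, -1 < l < 1 & p.[l] = 0.
Proof.
have le11 : -1 <= (1 : R) by lra.
by case/(poly_ivtoo le11)=> l; rewrite in_itv /= => l_in /rootP; exists l.
Qed.

Section MultiplierEquations.
Variables (R : realType) (alpha beta gamma0 : R).
Hypothesis beta_neq0 : beta != 0.

Local Notation k := (alpha ^+ 2 / beta ^+ 2).

Lemma g1fun_gfun B l : -1 < l < 1 ->
  g1fun alpha beta gamma0 B l = - gfun alpha beta gamma0 (- B) B l.
Proof.
case/andP=> l1 l2; have n2 : 1 - l != 0 by apply/eqP; lra.
have n3 : 1 - l ^+ 2 != 0 by apply/eqP; nra.
by rewrite /g1fun /gfun; field; rewrite beta_neq0 n3 n2.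
Qed.

Lemma g2fun_gfun A l : -1 < l < 1 ->
  g2fun alpha beta gamma0 A l = gfun alpha beta gamma0 A A l.
Proof.
case/andP=> l1 l2; have n1 : 1 + l != 0 by apply/eqP; lra.
have n3 : 1 - l ^+ 2 != 0 by apply/eqP; nra.
by rewrite /g2fun /gfun; field; rewrite beta_neq0 n3 n1.
Qed.

Lemma gfun_root A B : 0 < A -> 0 < B ->
  exists l, -1 < l < 1 /\ gfun alpha beta gamma0 (A - B) (A + B) l = 0.
Proof.
move=> A0 B0.
pose p : {poly R} := A *: (1 - 'X) ^+ 2 - B *: (1 + 'X) ^+ 2
   - ((2 * k) *: 'X + (2 * alpha * gamma0)%:P) * (1 - 'X ^+ 2) ^+ 2.
have pE x : p.[x] = A * (1 - x) ^+ 2 - B * (1 + x) ^+ 2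
   - (2 * k * x + 2 * alpha * gamma0) * (1 - x ^+ 2) ^+ 2 by rewrite !hornerE.
have [l hl] : exists2 l, -1 < l < 1 & p.[l] = 0.
  by apply: poly_root_N11; rewrite !pE; nra.
rewrite pE => pl; exists l; split=> //; case/andP: hl => l1 l2.
have n3 : 1 - l ^+ 2 != 0 by apply/eqP; nra.
rewrite /gfun -[RHS](mul0r ((1 - l ^+ 2) ^+ 2)^-1) -pl.
by field; rewrite n3 beta_neq0.
Qed.

Lemma g1fun_root B : 0 < B -> alpha * (gamma0 - alpha / beta ^+ 2) < - (B / 8) ->
  exists l, -1 < l < 1 /\ g1fun alpha beta gamma0 B l = 0.
Proof.
move=> B0; have -> : alpha * (gamma0 - alpha / beta ^+ 2) = alpha * gamma0 - k by ring.
move=> hB.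
pose p : {poly R} := B%:P + ((2 * k) *: 'X + (2 * alpha * gamma0)%:P) * (1 - 'X) ^+ 2.
have pE x : p.[x] = B + (2 * k * x + 2 * alpha * gamma0) * (1 - x) ^+ 2.
  by rewrite !hornerE.
have [l hl] : exists2 l, -1 < l < 1 & p.[l] = 0.
  by apply: poly_root_N11; rewrite !pE; nra.
rewrite pE => pl; exists l; split=> //; case/andP: hl => l1 l2.
have n2 : 1 - l != 0 by apply/eqP; lra.
rewrite /g1fun -[RHS](mul0r ((1 - l) ^+ 2)^-1) -pl.
by field; rewrite n2 beta_neq0.
Qed.

Lemma g2fun_root A : 0 < A -> alpha * (gamma0 + alpha / beta ^+ 2) > A / 8 ->
  exists l, -1 < l < 1 /\ g2fun alpha beta gamma0 A l = 0.
Proof.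
move=> A0; have -> : alpha * (gamma0 + alpha / beta ^+ 2) = alpha * gamma0 + k by ring.
move=> hA.
pose p : {poly R} := A%:P - ((2 * k) *: 'X + (2 * alpha * gamma0)%:P) * (1 + 'X) ^+ 2.
have pE x : p.[x] = A - (2 * k * x + 2 * alpha * gamma0) * (1 + x) ^+ 2.
  by rewrite !hornerE.
have [l hl] : exists2 l, -1 < l < 1 & p.[l] = 0.
  by apply: poly_root_N11; rewrite !pE; nra.
rewrite pE => pl; exists l; split=> //; case/andP: hl => l1 l2.
have n1 : 1 + l != 0 by apply/eqP; lra.
rewrite /g2fun -[RHS](mul0r ((1 + l) ^+ 2)^-1) -pl.
by field; rewrite n1 beta_neq0.
Qed.

End MultiplierEquations.

Theorem mainTheorem1 (R : realType) (X : completeNormedModType R)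
  (ip : X -> X -> R) (hip : is_inner_product ip)
  (hX : exists x : X, x != 0)
  (alpha beta : R) (halpha : alpha != 0) (hbeta : 0 < beta)
  (u0 v0 : X) (gamma0 : R) :
  let P := wproj beta (Ctilde (X:=X) alpha) in
  (* (i) *)
  (u0 != 0 -> v0 != 0 ->
    let p := `|u0| ^+ 2 - `|v0| ^+ 2 in
    let q := `|u0| ^+ 2 + `|v0| ^+ 2 in
    (exists! l : R, -1 < l < 1 /\ gfun alpha beta gamma0 p q l = 0) /\
    (forall l : R, -1 < l < 1 -> gfun alpha beta gamma0 p q l = 0 ->
       P (u0, v0, gamma0) =
       [set ((1 + l)^-1 *: u0, (1 - l)^-1 *: v0, gamma0 + l * alpha / beta ^+ 2)]))
  /\
  (* (ii) *)
  (v0 != 0 ->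
    (alpha * (gamma0 - alpha / beta ^+ 2) < - (`|v0| ^+ 2 / 8) ->
      (exists! l : R, -1 < l < 1 /\ g1fun alpha beta gamma0 (`|v0| ^+ 2) l = 0) /\
      (forall l : R, -1 < l < 1 -> g1fun alpha beta gamma0 (`|v0| ^+ 2) l = 0 ->
         P (0, v0, gamma0) =
         [set (0, (1 - l)^-1 *: v0, gamma0 + l * alpha / beta ^+ 2)]))
    /\
    (alpha * (gamma0 - alpha / beta ^+ 2) >= - (`|v0| ^+ 2 / 8) ->
      P (0, v0, gamma0) =
        [set w | exists u : X,
           `|u| = Num.sqrt (2 * alpha * (gamma0 - alpha / beta ^+ 2) + `|v0| ^+ 2 / 4)
           /\ w = (u, 2^-1 *: v0, gamma0 - alpha / beta ^+ 2)]
      /\ (is_singleton (P (0, v0, gamma0)) <->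
          alpha * (gamma0 - alpha / beta ^+ 2) = - (`|v0| ^+ 2 / 8))))
  /\
  (* (iii) *)
  (u0 != 0 ->
    (alpha * (gamma0 + alpha / beta ^+ 2) > `|u0| ^+ 2 / 8 ->
      (exists! l : R, -1 < l < 1 /\ g2fun alpha beta gamma0 (`|u0| ^+ 2) l = 0) /\
      (forall l : R, -1 < l < 1 -> g2fun alpha beta gamma0 (`|u0| ^+ 2) l = 0 ->
         P (u0, 0, gamma0) =
         [set ((1 + l)^-1 *: u0, 0, gamma0 + l * alpha / beta ^+ 2)]))
    /\
    (alpha * (gamma0 + alpha / beta ^+ 2) <= `|u0| ^+ 2 / 8 ->
      P (u0, 0, gamma0) =
        [set w | exists v : X,
           `|v| = Num.sqrt (- (2 * alpha * (gamma0 + alpha / beta ^+ 2)) + `|u0| ^+ 2 / 4)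
           /\ w = (2^-1 *: u0, v, gamma0 + alpha / beta ^+ 2)]
      /\ (is_singleton (P (u0, 0, gamma0)) <->
          alpha * (gamma0 + alpha / beta ^+ 2) = `|u0| ^+ 2 / 8)))
  /\
  (* (iv) *)
  ((alpha * gamma0 > alpha ^+ 2 / beta ^+ 2 ->
      P (0, 0, gamma0) =
        [set w | exists u : X,
           `|u| = Num.sqrt (2 * alpha * (gamma0 - alpha / beta ^+ 2))
           /\ w = (u, 0, gamma0 - alpha / beta ^+ 2)]
      /\ ~ is_singleton (P (0, 0, gamma0)))
   /\
   (`|alpha * gamma0| <= alpha ^+ 2 / beta ^+ 2 ->
      P (0, 0, gamma0) = [set (0, 0, 0)])
   /\
   (alpha * gamma0 < - (alpha ^+ 2 / beta ^+ 2) ->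
      P (0, 0, gamma0) =
        [set w | exists v : X,
           `|v| = Num.sqrt (- (2 * alpha * (gamma0 + alpha / beta ^+ 2)))
           /\ w = (0, v, gamma0 + alpha / beta ^+ 2)]
      /\ ~ is_singleton (P (0, 0, gamma0)))).
Proof.
move=> P; have beta_neq0 : beta != 0 by rewrite gt_eqF.
have norm0 : `|0 : X| ^+ 2 = 0 by rewrite normr0 expr0n.
have normX_gt0 (x : X) : x != 0 -> 0 < `|x| ^+ 2.
  by move=> x0; rewrite exprn_gt0 ?normr_gt0.
split; [|split; [|split]].
- move=> u0_neq0 v0_neq0 p q.
  apply: (wproj_lagrange_point hip hbeta halpha); last exact: lagrange_point_Ctilde.
  by apply: gfun_root => //; apply: normX_gt0.
- move=> v0_neq0; split=> hc.
  + have [||l_uniq Pl] := wproj_lagrange_point hip hbeta (u0 := 0) (v0 := v0)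
      (g0 := gamma0) (G := g1fun alpha beta gamma0 (`|v0| ^+ 2)) halpha.
    * exact: (g1fun_root beta_neq0 (normX_gt0 _ v0_neq0) hc).
    * move=> l hl g1l; apply: lagrange_point_Ctilde => //.
      by rewrite norm0 sub0r add0r -[LHS]opprK -g1fun_gfun // g1l oppr0.
    * by split=> // l hl gl; rewrite /P (Pl l hl gl) /lagrange_point scaler0.
  + have r0 : 0 <= 2 * alpha * (gamma0 - alpha / beta ^+ 2) + `|v0| ^+ 2 / 4 by lra.
    rewrite /P (wproj_sphere_u hip hbeta hX r0) is_singleton_sphere_image //; last by move=> x y [].
    by split=> //; lra.
- move=> u0_neq0; split=> hc.
  + have [||l_uniq Pl] := wproj_lagrange_point hip hbeta (u0 := u0) (v0 := 0)
      (g0 := gamma0) (G := g2fun alpha beta gamma0 (`|u0| ^+ 2)) halpha.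
    * exact: (g2fun_root beta_neq0 (normX_gt0 _ u0_neq0) hc).
    * move=> l hl g2l; apply: lagrange_point_Ctilde => //.
      by rewrite norm0 subr0 addr0 -g2fun_gfun.
    * by split=> // l hl gl; rewrite /P (Pl l hl gl) /lagrange_point scaler0.
  + have r0 : 0 <= - (2 * alpha * (gamma0 + alpha / beta ^+ 2)) + `|u0| ^+ 2 / 4 by lra.
    rewrite /P (wproj_sphere_v hip hbeta hX r0) is_singleton_sphere_image //; last by move=> x y [].
    by split=> //; lra.
- have k : alpha ^+ 2 / beta ^+ 2 = alpha * (alpha / beta ^+ 2) by ring.
  split; [|split]=> hc.
  + have r0 : 0 <= 2 * alpha * (gamma0 - alpha / beta ^+ 2) by lra.
    have := wproj_sphere_u hip hbeta (alpha := alpha) (v0 := 0) (g0 := gamma0) hX.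
    rewrite /P norm0 mul0r addr0 scaler0 => /(_ r0) ->.
    rewrite is_singleton_sphere_image //; last by move=> x y [].
    by split=> //; lra.
  + by rewrite /P (wproj_origin hip hbeta halpha hc).
  + have r0 : 0 <= - (2 * alpha * (gamma0 + alpha / beta ^+ 2)) by lra.
    have := wproj_sphere_v hip hbeta (alpha := alpha) (u0 := 0) (g0 := gamma0) hX.
    rewrite /P norm0 mul0r addr0 scaler0 => /(_ r0) ->.
    rewrite is_singleton_sphere_image //; last by move=> x y [].
    by split=> //; lra.
Qed.
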